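(* Let $(\mathbb{S}^2,d_H)$ be the doubled hexagon described in the context. The minimum of the lengths of the nonconstant restricted closed geodesics of $(\mathbb{S}^2,d_H)$ equals $4$. This minimum is attained, for instance, by the restricted closed geodesic whose projection $p\circ\gamma$ traverses the vertical segment from $-i$ to $i$ in $H$ (a segment orthogonal to two opposite edges of $H$) once in each copy of $H$, i.e. back and forth.
   Context: Identify $\mathbb{R}^2$ with $\mathbb{C}$. Let $H$ be the closed regular hexagon with vertices $\frac{2}{\sqrt3}e^{ik\pi/3}$, $k=0,\dots,5$ (so the distance from the center to each edge is $1$). For $k=0,1,2$ let $L_k=\{te^{i(\pi/6+2k\pi/3)}: t\in\mathbb{R}\}$, $\overline{L_k}=\{te^{i(\pi/6+2k\pi/3)}: t\in[0,1]\}$, $\pi_k$ the orthogonal projection of $\mathbb{C}$ onto $L_k$, and for a set $A\subset H$ let $\overline{\pi_k}(A)=\pi_k(A)\cap\overline{L_k}$; $|\cdot|$ denotes one-dimensional Lebesgue measure on $L_k$. For a straight segment $\sigma\subset H$ set $\ell(\sigma)=\sum_{k=0}^{2}|\overline{\pi_k}(\sigma)|$ (this is the length of $\sigma$ for the pseudo-metric $d_H$ on $H$ defined as the infimum of $\sum_k|\overline{\pi_k}(\gamma([0,1]))|$ over piecewise smooth curves $\gamma$ joining two points). Let $\mathbb{S}^2$ be obtained from two copies $H_1,H_2$ of $H$ by identifying corresponding boundary points, and let $p:\mathbb{S}^2\to H$ be the canonical projection; let $V$ be the set of the six vertices. A restricted closed geodesic is a nonconstant closed curve $\gamma$ in $\mathbb{S}^2\setminus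 V$ made of finitely many straight segments $\sigma_1,\dots,\sigma_N$ (cyclically ordered), each contained in one copy $H_j$ and joining two points in the interiors of edges, consecutive segments lying in different copies (so $N$ is even), such that $p\circ\gamma$ is a periodic billiard trajectory in $H$: at each edge point the direction of the next segment is the mirror reflection across that edge of the direction of the previous segment (angle of incidence equals angle of reflection). Its length is $\sum_{j=1}^N\ell(p(\sigma_j))$. *)

From HB Require Import structures.
From mathcomp Require Import all_boot all_order all_algebra.
From mathcomp Require Import all_classical all_reals all_analysis.
Set Implicit Arguments. Unset Strict Implicit. Unset Printing Implicit Defensive.
Import Order.TTheory GRing.Theory Num.Theory.
Local Open Scope classical_set_scope.
Local Open Scope ring_scope.

Section Hexagon.
Variable R : realType.

(* Points of the plane R^2 = C, as pairs (real part, imaginary part). *)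
Definition pt := (R * R)%type.
Definition padd (z w : pt) : pt := (z.1 + w.1, z.2 + w.2).
Definition psub (z w : pt) : pt := (z.1 - w.1, z.2 - w.2).
Definition pscale (a : R) (z : pt) : pt := (a * z.1, a * z.2).
Definition pdot (z w : pt) : R := z.1 * w.1 + z.2 * w.2.
Definition expi (theta : R) : pt := (cos theta, sin theta).

Definition hvertex (k : nat) : pt :=
  pscale (2 / Num.sqrt 3) (expi (k%:R * pi / 3)).

Definition H : set pt :=
  [set z | exists lam : 'I_6 -> R,
     (forall k, 0 <= lam k) /\ \sum_(k < 6) lam k = 1 /\
     z = (\sum_(k < 6) lam k * (hvertex k).1, \sum_(k < 6) lam k * (hvertex k).2)].

Definition edge_dir (k : 'I_6) : pt := psub (hvertex k.+1) (hvertex k).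
Definition edge_interior (k : 'I_6) : set pt :=
  [set z | exists s : R, 0 < s < 1 /\ z = padd (hvertex k) (pscale s (edge_dir k))].

Definition segment (P Q : pt) : set pt :=
  [set z | exists s : R, 0 <= s <= 1 /\ z = padd P (pscale s (psub Q P))].

Definition reflect_dir (w d : pt) : pt :=
  psub (pscale (2 * pdot d w / pdot w w) w) d.

(* L_k has unit direction e^{i(pi/6 + 2 k pi/3)}; a point t e^{i(...)} of L_k
   is identified with the coordinate t, so Lebesgue measure on L_k is Lebesgue
   measure on the coordinate t. *)
Definition Ldir (k : nat) : pt := expi (pi / 6 + 2 * k%:R * pi / 3).

(* bar pi_k (A) = pi_k(A) cap bar L_k, in the coordinate t *)
Definition proj_bar (k : nat) (A : set pt) : set R :=
  [set t | 0 <= t <= 1 /\ exists2 z, A z & t = pdot z (Ldir k)].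

Definition seg_length (P Q : pt) : \bar R :=
  (\sum_(k < 3) lebesgue_measure (proj_bar k (segment P Q)))%E.

(* A restricted closed geodesic with N segments is encoded by the cyclic
   sequence of its break points P 0, ..., P (N-1) (indices taken mod N);
   segment sigma_(j+1) = [P j, P (j+1)] lies in copy H_(j mod 2). *)
Definition restricted_closed_geodesic (N : nat) (P : nat -> pt) : Prop :=
  (0 < N)%N /\ ~~ odd N /\
  (forall j, P (j + N)%N = P j) /\
  (forall j, P j <> P j.+1) /\
  (forall j, segment (P j) (P j.+1) `<=` H) /\
  (forall j, exists k : 'I_6, edge_interior k (P j.+1) /\
      exists2 lam : R, 0 < lam &
        psub (P j.+2) (P j.+1) = pscale lam (reflect_dir (edge_dir k) (psub (P j.+1) (P j)))).

Definition geodesic_length (N : nat) (P : nat -> pt) : \bar R :=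
  (\sum_(j < N) seg_length (P j) (P j.+1))%E.

(* the vertical back-and-forth geodesic: -i -> i (copy H_1) -> -i (copy H_2) *)
Definition vertical_geodesic (j : nat) : pt := if odd j then (0, 1) else (0, -1).

End Hexagon.

From HB Require Import structures.
From mathcomp Require Import all_boot all_order all_algebra.
From mathcomp Require Import all_classical all_reals all_analysis.
From mathcomp Require Import lra ring.
Set Implicit Arguments. Unset Strict Implicit. Unset Printing Implicit Defensive.
Import Order.TTheory GRing.Theory Num.Theory.
Local Open Scope classical_set_scope.
Local Open Scope ring_scope.

(* Write a point z of the plane in the coordinates a_k = <z, u_k>, where u_k is
   the unit direction of L_k; then a_0 + a_1 + a_2 = 0 and H = {|a_k| <= 1}.
   Since the a_k never exceed 1 on H, the projection [proj_bar k] of a segment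
   [P, Q] of H is the interval between a_k(P)^+ and a_k(Q)^+, so its length is
   the pseudo-distance D(P, Q) = sum_k |a_k(P)^+ - a_k(Q)^+|.
   Number the edges 0..5; on edge 2i the coordinate a_i equals 1, on an odd
   edge some coordinate equals -1. Consider the break points of a closed
   geodesic of N segments.
   - If two of them lie on edges at D-distance >= 2 (e.g. opposite edges), the
     closed polygon through them has length >= 2 * 2.
   - Otherwise, if one lies on an even edge, all of them lie on that edge and
     its two neighbours, i.e. in a wedge with apex X; at each bounce the
     trajectory turns away from X, so the projection of X-relative position on
     the unit direction of motion strictly increases: the trajectory cannot
     close.
   - Otherwise all break points lie on the three odd edges. Two consecutive
     ones are never on the same edge and a pattern a, b, a is impossible, so
     any two consecutive segments have total length >= 2 and the length is at
     least N >= 4.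
   The back-and-forth vertical segment, joining the midpoints of edges 1 and
   4, has length 4. *)

Definition pospart (R : realDomainType) (x : R) := Num.max 0 x.

Lemma pospart_id (R : realDomainType) (x : R) : 0 <= x -> pospart x = x.
Proof. by move=> x_ge0; apply/max_idPr. Qed.

Lemma pospart_eq0 (R : realDomainType) (x : R) : x <= 0 -> pospart x = 0.
Proof. by move=> x_le0; apply/max_idPl. Qed.

Ltac pospart_tac := repeat match goal with |- context [@pospart _ ?x] =>
  first [rewrite [pospart x]pospart_id; last lra
        | rewrite [pospart x]pospart_eq0; last lra] end.

Section Trilinear.
Variable R : rcfType.

Record tri := Tri { a0 : R; a1 : R; a2 : R }.

Definition tsub (p q : tri) := Tri (a0 p - a0 q) (a1 p - a1 q) (a2 p - a2 q).
Definition tadd (p q : tri) := Tri (a0 p + a0 q) (a1 p + a1 q) (a2 p + a2 q).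
Definition tscale (l : R) (p : tri) := Tri (l * a0 p) (l * a1 p) (l * a2 p).
Definition tdot (p q : tri) := a0 p * a0 q + a1 p * a1 q + a2 p * a2 q.

Lemma tri_coordsE p q : p = q -> [/\ a0 p = a0 q, a1 p = a1 q & a2 p = a2 q].
Proof. by move=> ->. Qed.

Lemma tdot_tsub_gt0 p q : p <> q -> 0 < tdot (tsub q p) (tsub q p).
Proof.
case: p => p0 p1 p2; case: q => q0 q1 q2 neq_pq; rewrite /tdot /=.
have sq_gt0 (z : R) : z != 0 -> 0 < z * z.
  by move=> z0; rewrite lt_def mulf_neq0 //= -expr2 sqr_ge0.
have := sqr_ge0 (q0 - p0); have := sqr_ge0 (q1 - p1); have := sqr_ge0 (q2 - p2).
rewrite !expr2.
case: (eqVneq (q0 - p0) 0) => h0; last by have := sq_gt0 _ h0; lra.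
case: (eqVneq (q1 - p1) 0) => h1; last by have := sq_gt0 _ h1; lra.
case: (eqVneq (q2 - p2) 0) => h2; last by have := sq_gt0 _ h2; lra.
by move=> *; case: neq_pq; congr Tri; lra.
Qed.

(* The trilinear coordinates of the points of [edge_interior k]. *)
Definition on_edge (k : nat) (p : tri) : Prop := exists s : R, 0 < s < 1 /\
  match k with
  | 0 => a0 p = 1 /\ a1 p = -1 + s /\ a2 p = - s
  | 1 => a0 p = 1 - s /\ a1 p = s /\ a2 p = -1
  | 2 => a0 p = - s /\ a1 p = 1 /\ a2 p = -1 + s
  | 3 => a0 p = -1 /\ a1 p = 1 - s /\ a2 p = s
  | 4 => a0 p = -1 + s /\ a1 p = - s /\ a2 p = 1
  | 5 => a0 p = s /\ a1 p = -1 /\ a2 p = 1 - s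
  | _ => False
  end.

(* [reflect_dir (edge_dir k)] in trilinear coordinates. *)
Definition edge_reflect (k : nat) (c : tri) : tri :=
  match k with
  | 0 | 3 => Tri (- a0 c) (- a2 c) (- a1 c)
  | 1 | 4 => Tri (- a1 c) (- a0 c) (- a2 c)
  | _ => Tri (- a2 c) (- a1 c) (- a0 c)
  end.

Definition hexdist (p q : tri) : R :=
  `|pospart (a0 p) - pospart (a0 q)| + `|pospart (a1 p) - pospart (a1 q)|
  + `|pospart (a2 p) - pospart (a2 q)|.

Lemma hexdist_sym p q : hexdist p q = hexdist q p.
Proof.
by rewrite /hexdist (distrC (pospart (a0 p))) (distrC (pospart (a1 p)))
  (distrC (pospart (a2 p))).
Qed.

Lemma hexdist_triangle p q r : hexdist p r <= hexdist p q + hexdist q r.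
Proof.
have := ler_distD (pospart (a0 q)) (pospart (a0 p)) (pospart (a0 r)).
have := ler_distD (pospart (a1 q)) (pospart (a1 p)) (pospart (a1 r)).
have := ler_distD (pospart (a2 q)) (pospart (a2 p)) (pospart (a2 r)).
rewrite /hexdist; lra.
Qed.

Lemma hexdist_xx p : hexdist p p = 0.
Proof. by rewrite /hexdist !subrr normr0 !addr0. Qed.

Lemma on_edge_lt6 k p : on_edge k p -> (k < 6)%N.
Proof. by case: k => [|[|[|[|[|[|k]]]]]] //= [s [_ []]]. Qed.

Ltac case_edge h := let s := fresh "s" in let hs := fresh "hs" in
  let e0 := fresh "e0" in let e1 := fresh "e1" in let e2 := fresh "e2" in
  case: h => s [hs [e0 [e1 e2]]].

Lemma on_edge_bounds k p : on_edge k p ->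
  [/\ -1 <= a0 p <= 1, -1 <= a1 p <= 1, -1 <= a2 p <= 1 & a0 p + a1 p + a2 p = 0].
Proof.
case: k => [|[|[|[|[|[|k]]]]]] h; try by case: h => s [_ []].
all: by case_edge h; rewrite e0 e1 e2; split; lra.
Qed.

(* The goals below bound sums of norms from below, so [lra] only needs
   [u <= `|u|] and [- u <= `|u|]. *)
Ltac norm_lb_tac := repeat match goal with |- context [@Num.norm _ _ ?u] =>
  let h1 := fresh "h" in let h2 := fresh "h" in let v := fresh "v" in
  have /ler_normlP [h1 h2] := lexx `|u|;
  move: h1 h2; move: (`|u|) => v h1 h2 end.

Definition far_edges (a b : nat) : bool :=
  (a, b) \in [:: (0,2); (2,0); (0,4); (4,0); (2,4); (4,2); (0,3); (3,0);
                (2,5); (5,2); (4,1); (1,4)]%N.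

Lemma hexdist_far_edges a b p q :
  far_edges a b -> on_edge a p -> on_edge b q -> 2 <= hexdist p q.
Proof.
rewrite /far_edges; case: a => [|[|[|[|[|[|a]]]]]]; case: b => [|[|[|[|[|[|b]]]]]] //= _ hp hq;
by case_edge hp; case_edge hq; rewrite /hexdist e0 e1 e2 e3 e4 e5;
  pospart_tac; norm_lb_tac; lra.
Qed.

Definition odd_edge (a : nat) : bool := a \in [:: 1; 3; 5]%N.

Lemma hexdist_odd_edges a b c p q r :
  odd_edge a -> odd_edge b -> odd_edge c -> a != b -> b != c -> a != c ->
  on_edge a p -> on_edge b q -> on_edge c r -> 2 <= hexdist p q + hexdist q r.
Proof.
rewrite /odd_edge; case: a => [|[|[|[|[|[|a]]]]]] //; case: b => [|[|[|[|[|[|b]]]]]] //;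
case: c => [|[|[|[|[|[|c]]]]]] // _ _ _ _ _ _ hp hq hr;
by case_edge hp; case_edge hq; case_edge hr;
  rewrite /hexdist e0 e1 e2 e3 e4 e5 e6 e7 e8; pospart_tac; norm_lb_tac; lra.
Qed.

Lemma no_return_bounce a b p q r l :
  odd_edge a -> odd_edge b -> a != b -> 0 < l ->
  on_edge a p -> on_edge b q -> on_edge a r ->
  tsub r q = tscale l (edge_reflect b (tsub q p)) -> False.
Proof.
rewrite /odd_edge; case: a => [|[|[|[|[|[|a]]]]]] //; case: b => [|[|[|[|[|[|b]]]]]] //
  _ _ _ l_gt0 hp hq hr /tri_coordsE [] /=;
by case_edge hp; case_edge hq; case_edge hr; rewrite e0 e1 e2 e3 e4 e5 e6 e7 e8; nra.
Qed.

Section PeriodicSequence.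
Variable x : nat -> tri.

Lemma hexdist_le_path i m :
  hexdist (x i) (x (i + m)) <= \sum_(i <= j < i + m) hexdist (x j) (x j.+1).
Proof.
elim: m => [|m IH]; first by rewrite addn0 hexdist_xx big_geq.
rewrite addnS big_nat_recr ?leq_addr //=.
apply: le_trans (hexdist_triangle (x i) (x (i + m)) (x (i + m).+1)) _.
by rewrite lerD2r.
Qed.

Variable N : nat.
Hypothesis x_periodic : forall j, x (j + N) = x j.

Lemma periodic_mod j : x j = x (j %% N)%N.
Proof.
rewrite {1}(divn_eq j N); elim: (j %/ N)%N => [|q IH]; first by rewrite mul0n add0n.
by rewrite mulSn -addnA addnC x_periodic.
Qed.

Definition loop_length := \sum_(j < N) hexdist (x j) (x j.+1).

(* The closed polygon through x a and x b consists of two paths between them. *)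
Lemma loop_length_ge_hexdist a b : (0 < N)%N -> 2 * hexdist (x a) (x b) <= loop_length.
Proof.
move=> N_gt0.
suff le_ab a' b' : (a' <= b')%N -> (b' < N)%N ->
    2 * hexdist (x a') (x b') <= loop_length.
  rewrite (periodic_mod a) (periodic_mod b).
  have ha : (a %% N < N)%N by rewrite ltn_pmod.
  have hb : (b %% N < N)%N by rewrite ltn_pmod.
  case: (leqP (a %% N)%N (b %% N)%N) => h; first exact: le_ab.
  by rewrite hexdist_sym; apply: le_ab => //; apply: ltnW.
move=> ab bN.
rewrite /loop_length -(big_mkord xpredT (fun j => hexdist (x j) (x j.+1))).
have aN : (a' <= N)%N by apply: leq_trans ab (ltnW bN).
rewrite (@big_cat_nat _ _ _ a' 0 N) //= (@big_cat_nat _ _ _ b' a' N) //=; last exact: ltnW.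
have := hexdist_le_path a' (b' - a'); rewrite subnKC //.
have := hexdist_le_path b' (N - b'); rewrite subnKC; last exact: ltnW.
rewrite -[N]add0n x_periodic.
have := hexdist_le_path 0 a'; rewrite add0n.
have := hexdist_triangle (x b') (x 0) (x a'); rewrite [hexdist (x b') (x a')]hexdist_sym.
lra.
Qed.

Lemma sum_shift_periodic (f : nat -> R) :
  f N = f 0 -> \sum_(j < N) f j.+1 = \sum_(j < N) f j.
Proof.
case: N => [|n] fN; first by rewrite !big_ord0.
by rewrite big_ord_recr /= fN big_ord_recl /= addrC.
Qed.

End PeriodicSequence.

Section Billiard.
Variable x : nat -> tri.
Variable N : nat.
Hypothesis N_gt0 : (0 < N)%N.
Hypothesis x_periodic : forall j, x (j + N) = x j.
Hypothesis x_neq : forall j, x j <> x j.+1.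
Hypothesis x_bounce : forall j, exists k, on_edge k (x j.+1) /\ exists l, 0 < l /\
  tsub (x j.+2) (x j.+1) = tscale l (edge_reflect k (tsub (x j.+1) (x j))).

Definition step j := tsub (x j.+1) (x j).

Lemma periodic0 : x N = x 0.
Proof. by rewrite -[N]add0n x_periodic. Qed.

Lemma periodic1 : x N.+1 = x 1.
Proof. by rewrite -[N.+1]add1n x_periodic. Qed.

Lemma on_some_edge j : exists k, on_edge k (x j).
Proof.
case: j => [|j]; last by case: (x_bounce j) => k [hk _]; exists k.
by case: (x_bounce N.-1) => k [hk _]; exists k; rewrite -periodic0 -(prednK N_gt0).
Qed.

Lemma coord_sum0 j : a0 (x j) + a1 (x j) + a2 (x j) = 0.
Proof. by case: (on_some_edge j) => k /on_edge_bounds []. Qed.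

Lemma step_coord_sum0 j : a0 (step j) + a1 (step j) + a2 (step j) = 0.
Proof. by rewrite /step /=; have := coord_sum0 j; have := coord_sum0 j.+1; lra. Qed.

Section Potential.
Variable X : tri.
Hypothesis turn_away : forall j k, on_edge k (x j.+1) ->
  0 <= tdot (tsub (x j.+1) X) (tsub (edge_reflect k (step j)) (step j)).

Definition potential j := tdot (tsub (x j) X) (step j) / Num.sqrt (tdot (step j) (step j)).

(* The reflection preserves [tdot], so turning away from X increases the
   component of the position along the unit direction of motion. *)
Lemma potential_lt_succ j : potential j < potential j.+1.
Proof.
case: (x_bounce j) => k [hk [l [l_gt0 e]]].
have hL := turn_away hk.
have n_gt0 : 0 < tdot (step j) (step j) := tdot_tsub_gt0 (@x_neq j).
have s_gt0 : 0 < Num.sqrt (tdot (step j) (step j)) by rewrite sqrtr_gt0.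
have estep : step j.+1 = tscale l (edge_reflect k (step j)) by [].
have enorm : tdot (step j.+1) (step j.+1) = l ^+ 2 * tdot (step j) (step j).
  rewrite estep /tdot /tscale /edge_reflect.
  by case: k {hk hL e estep} => [|[|[|[|[|k]]]]] /=; ring.
have -> : potential j.+1 =
    tdot (tsub (x j.+1) X) (edge_reflect k (step j)) / Num.sqrt (tdot (step j) (step j)).
  rewrite /potential enorm sqrtrM ?sqr_ge0 // sqrtr_sqr ger0_norm ?ltW // estep.
  by rewrite /tdot /tscale /=; field; apply/andP; split; rewrite gt_eqF.
have -> : potential j = (tdot (tsub (x j.+1) X) (step j) - tdot (step j) (step j))
    / Num.sqrt (tdot (step j) (step j)).
  by rewrite /potential; congr (_ / _); rewrite /tdot /step /=; ring.
rewrite ltr_pM2r ?invr_gt0 //.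
by move: hL n_gt0; rewrite /tdot /step /=; lra.
Qed.

Lemma no_loop_turning_away : False.
Proof.
have incr m : potential 0 < potential m.+1.
  elim: m => [|m IH]; first exact: potential_lt_succ.
  exact: lt_trans IH (potential_lt_succ m.+1).
have := incr N.-1; rewrite (prednK N_gt0).
suff -> : potential N = potential 0 by rewrite ltxx.
by rewrite /potential /step periodic0 -[N.+1]add1n x_periodic.
Qed.

End Potential.

Definition coord (i : nat) (p : tri) := match i with 0 => a0 p | 1 => a1 p | _ => a2 p end.

Lemma coord_sub i p q : coord i (tsub p q) = coord i p - coord i q.
Proof. by case: i => [|[|i]]. Qed.

Lemma coord_scale i l p : coord i (tscale l p) = l * coord i p.
Proof. by case: i => [|[|i]]. Qed.

Section Slide.
Variables (k ni ti : nat) (v : R).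
Hypothesis edge_on_line : forall p, on_edge k p -> coord ni p = v.
Hypothesis line_meets_edge : forall k' p, on_edge k' p -> coord ni p = v -> k' = k.
Hypothesis reflect_line :
  forall q, coord ni q = 0 -> a0 q + a1 q + a2 q = 0 -> edge_reflect k q = q.
Hypothesis line_coord :
  forall q, coord ni q = 0 -> a0 q + a1 q + a2 q = 0 -> coord ti q = 0 -> q = Tri 0 0 0.

Variable j : nat.
Hypotheses (on_k : on_edge k (x j)) (on_k1 : on_edge k (x j.+1)).

Let u := coord ti (step j).

Lemma slide_speed_neq0 : u != 0.
Proof.
apply/eqP => u0; apply: (@x_neq j).
have := line_coord (q := step j); rewrite /step coord_sub (edge_on_line on_k).
rewrite (edge_on_line on_k1) subrr => /(_ erefl (step_coord_sum0 j) u0) /tri_coordsE [] /=.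
by case: (x j) => ? ? ?; case: (x j.+1) => ? ? ? /= *; congr Tri; lra.
Qed.

(* Once the trajectory moves along edge k, it keeps bouncing on edge k with
   a direction parallel to the first one, so coord ti moves monotonically. *)
Lemma slide_invariant m :
  [/\ coord ni (x (j + m)) = v, coord ni (x (j + m).+1) = v,
      0 < coord ti (step (j + m)) * u
    & 0 < (coord ti (x (j + m).+1) - coord ti (x j)) * u].
Proof.
have uu : 0 < u * u by rewrite lt_def mulf_neq0 ?slide_speed_neq0 //= -expr2 sqr_ge0.
elim: m => [|m [h1 h2 h3 h4]].
  by rewrite addn0 -coord_sub; split => //; exact: edge_on_line.
case: (x_bounce (j + m)) => k' [hk' [l [l_gt0 e]]].
have ek : k' = k by apply: line_meets_edge hk' h2.
subst k'.
have ecm : step (j + m).+1 = tscale l (step (j + m)).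
  rewrite /step e reflect_line // ?step_coord_sum0 //.
  by rewrite -/(step (j + m)) /step coord_sub h1 h2 subrr.
have := f_equal (coord ni) ecm; have := f_equal (coord ti) ecm.
rewrite /step !coord_sub !coord_scale h2 -!/(step _) -addnS.
rewrite [coord ni (tsub _ _)]coord_sub h1 h2 subrr mulr0 => et en.
rewrite addnS; rewrite addnS in et en; split.
- exact: h2.
- lra.
- by rewrite et -mulrA mulr_gt0.
- have : 0 < (coord ti (x (j + m).+2) - coord ti (x (j + m).+1)) * u.
    by rewrite et -mulrA mulr_gt0.
  by move: h4; lra.
Qed.

Lemma slide_never_closes : False.
Proof.
have [_ _ _] := slide_invariant N.-1.
by rewrite -addnS (prednK N_gt0) x_periodic subrr mul0r ltxx.
Qed.

End Slide.

Ltac slide_tac lem :=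
  let k := fresh "k" in let hp := fresh "hp" in let e := fresh "e" in
  apply: lem;
  [ by move=> ? hp; case_edge hp; simpl; lra
  | by move=> k ? hp e; case: k hp e => [|[|[|[|[|[|?]]]]]] hp e //;
      try (by case: hp => ? [_ []]); case_edge hp; simpl in e; exfalso; lra
  | by case=> ? ? ? /= ? ?; congr Tri; lra
  | by case=> ? ? ? /= ? ? ?; congr Tri; lra ].

Lemma no_slide_on_odd_edge a j :
  odd_edge a -> on_edge a (x j) -> on_edge a (x j.+1) -> False.
Proof.
rewrite /odd_edge; case: a => [|[|[|[|[|[|a]]]]]] //= _.
- slide_tac (@slide_never_closes 1 2 0 (-1)).
- slide_tac (@slide_never_closes 3 0 1 (-1)).
- slide_tac (@slide_never_closes 5 1 0 (-1)).
Qed.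

Hypothesis N_even : ~~ odd N.

Lemma loop_length_odd_edges : (forall j k, on_edge k (x j) -> odd_edge k) ->
  4 <= loop_length x N.
Proof.
move=> odd_bounce.
have pair_ge2 j : 2 <= hexdist (x j) (x j.+1) + hexdist (x j.+1) (x j.+2).
  case: (on_some_edge j) => a ha.
  case: (x_bounce j) => k [hk [l [l_gt0 e]]].
  case: (x_bounce j.+1) => k2 [hk2 _].
  have oa := odd_bounce _ _ ha; have ok := odd_bounce _ _ hk.
  have ok2 := odd_bounce _ _ hk2.
  have ak : a != k by apply/eqP => ak; subst k; exact: (no_slide_on_odd_edge oa ha hk).
  have kk2 : k != k2.
    by apply/eqP => kk; subst k2; exact: (no_slide_on_odd_edge ok hk hk2).
  have ak2 : a != k2.
    by apply/eqP => ak2; subst k2; exact: (no_return_bounce oa ok ak l_gt0 ha hk hk2 e).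
  exact: hexdist_odd_edges oa ok ok2 ak kk2 ak2 ha hk hk2.
have N_neq2 : N != 2%N.
  apply/eqP => N2.
  case: (on_some_edge 0) => a ha.
  case: (x_bounce 0) => k [hk [l [l_gt0 e]]].
  have oa := odd_bounce _ _ ha; have ok := odd_bounce _ _ hk.
  have ak : a != k by apply/eqP => ak; subst k; exact: (no_slide_on_odd_edge oa ha hk).
  have x2 : x 2 = x 0 by rewrite -N2 periodic0.
  rewrite x2 in e.
  exact: (no_return_bounce oa ok ak l_gt0 ha hk ha e).
have N_ge4 : (4 <= N)%N by move: N_gt0 N_even N_neq2; case: N => [|[|[|[|n]]]].
have sum_pairs : \sum_(j < N) (hexdist (x j) (x j.+1) + hexdist (x j.+1) (x j.+2))
    = 2 * loop_length x N.
  rewrite big_split /= (sum_shift_periodic (f := fun j => hexdist (x j) (x j.+1))) /=.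
    by rewrite /loop_length mulr2n mulrDl mul1r.
  by rewrite periodic0 periodic1.
have : \sum_(j < N) (2 : R)
    <= \sum_(j < N) (hexdist (x j) (x j.+1) + hexdist (x j.+1) (x j.+2)).
  by apply: ler_sum => j _; exact: pair_ge2.
rewrite sum_pairs sumr_const card_ord -mulr_natr.
have : (4 : R) <= N%:R by rewrite ler_nat.
lra.
Qed.

Lemma no_loop_in_wedge k0 X j0 : on_edge k0 (x j0) ->
  (forall a b ka kb, far_edges ka kb -> on_edge ka (x a) -> on_edge kb (x b) -> False) ->
  (forall j k, on_edge k (x j.+1) -> ~~ far_edges k0 k ->
     0 <= tdot (tsub (x j.+1) X) (tsub (edge_reflect k (step j)) (step j))) ->
  False.
Proof.
move=> h0 nofar convex; apply: (@no_loop_turning_away X) => j k hk.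
by apply: (convex _ _ hk); apply/negP => fk; exact: nofar j0 j.+1 k0 k fk h0 hk.
Qed.

(* X is the apex of the wedge formed by the lines of the edges adjacent to k0. *)
Ltac wedge_tac j k hk :=
  case: (on_some_edge j) => ? /on_edge_bounds [? ? ? ?];
  case: k hk => [|[|[|[|[|[|k]]]]]] hk //= _; try (by case: hk => ? [_ []]);
  rewrite /tdot /step /=; case: hk => ? [? [-> [-> ->]]]; lra.

Lemma loop_length_ge4 : 4 <= loop_length x N.
Proof.
have [[a [b [ka [kb [fk ha hb]]]]] | nofar] := pselect
    (exists a b ka kb, [/\ far_edges ka kb, on_edge ka (x a) & on_edge kb (x b)]).
  have := hexdist_far_edges fk ha hb; have := loop_length_ge_hexdist x_periodic a b N_gt0.
  lra.
have {}nofar a b ka kb : far_edges ka kb -> on_edge ka (x a) -> on_edge kb (x b) -> False.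
  by move=> fk ha hb; apply: nofar; exists a, b, ka, kb.
have [[j0 h0] | h0] := pselect (exists j, on_edge 0 (x j)).
  by exfalso; apply: (no_loop_in_wedge (X := Tri 2 (-1) (-1)) h0 nofar) => j k hk; wedge_tac j k hk.
have [[j0 h2] | h2] := pselect (exists j, on_edge 2 (x j)).
  by exfalso; apply: (no_loop_in_wedge (X := Tri (-1) 2 (-1)) h2 nofar) => j k hk; wedge_tac j k hk.
have [[j0 h4] | h4] := pselect (exists j, on_edge 4 (x j)).
  by exfalso; apply: (no_loop_in_wedge (X := Tri (-1) (-1) 2) h4 nofar) => j k hk; wedge_tac j k hk.
apply: loop_length_odd_edges => j k hk.
have := on_edge_lt6 hk; case: k hk => [|[|[|[|[|[|k]]]]]] hk //.
- by case: h0; exists j.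
- by case: h2; exists j.
- by case: h4; exists j.
Qed.

End Billiard.
End Trilinear.

Section Hexagon_coordinates.
Variable R : realType.
Notation sqrt3 := (Num.sqrt (3 : R)).

Lemma sqrt3_gt0 : 0 < sqrt3.
Proof. by rewrite sqrtr_gt0. Qed.

Lemma sqrt3_neq0 : sqrt3 != 0.
Proof. by rewrite gt_eqF // sqrt3_gt0. Qed.

Lemma sqrt3_mul_self : sqrt3 * sqrt3 = 3.
Proof. by rewrite -expr2 sqr_sqrtr. Qed.

Lemma cos_pi3 : cos (pi / 3 : R) = 1 / 2.
Proof.
set t := pi / 3 : R.
have pi0 := @pi_gt0 R.
have c0 : 0 < cos t.
  apply: cos_gt0_pihalf; rewrite /t; apply/andP; split; lra.
have e : t *+ 2 + t = pi by rewrite /t; field.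
have := cosD (t *+ 2) t; rewrite e cospi cos_mulr2n sin_mulr2n.
have := cos2Dsin2 t; rewrite !expr2 => h.
set c := cos t in c0 h *; set s := sin t in h *.
move=> h2; have h3 : (c + 1) * (2 * c - 1) * (2 * c - 1) = 0 by rewrite mulr2n in h2; nra.
move/eqP: h3; rewrite !mulf_eq0 => /orP [/orP [h4|h4]|h4]; move/eqP: h4 => h4; lra.
Qed.

Lemma sin_pi3 : sin (pi / 3 : R) = sqrt3 / 2.
Proof.
set t := pi / 3 : R.
have pi0 := @pi_gt0 R.
have s0 : 0 < sin t by apply: sin_gt0_pi; rewrite /t; apply/andP; split; lra.
have := cos2Dsin2 t; rewrite cos_pi3 !expr2 => h.
have := sqrt3_mul_self; have := sqrt3_gt0 => h1 h2.
have h3 : (sin t - sqrt3 / 2) * (sin t + sqrt3 / 2) = 0 by nra.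
move/eqP: h3; rewrite mulf_eq0 => /orP [] /eqP h4; lra.
Qed.

Definition vertex_xy (k : nat) : pt R :=
  match k with
  | 0 => (2 / sqrt3, 0) | 1 => (1 / sqrt3, 1) | 2 => (- (1 / sqrt3), 1)
  | 3 => (- (2 / sqrt3), 0) | 4 => (- (1 / sqrt3), -1) | 5 => (1 / sqrt3, -1)
  | _ => (2 / sqrt3, 0)
  end.

Lemma hvertexE k : (k <= 6)%N -> hvertex R k = vertex_xy k.
Proof.
have pi0 := @pi_gt0 R; have sqrt3_nz := sqrt3_neq0.
have c3 := cos_pi3; have s3 := sin_pi3.
rewrite /hvertex /expi /pscale.
case: k => [|[|[|[|[|[|[|k]]]]]]] // _ /=.
- rewrite mul0r mul0r cos0 sin0; by congr pair; field.
- rewrite !mul1r c3 s3; by congr pair; field.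
- have -> : 2%:R * pi / 3 = pi - pi / 3 :> R by field.
  rewrite cosB sinB cospi sinpi c3 s3; by congr pair; field.
- have -> : 3%:R * pi / 3 = pi :> R by field.
  rewrite cospi sinpi; by congr pair; field.
- have -> : 4%:R * pi / 3 = pi + pi / 3 :> R by field.
  rewrite cosD sinD cospi sinpi c3 s3; by congr pair; field.
- have -> : 5%:R * pi / 3 = pi *+ 2 - pi / 3 :> R by rewrite mulr2n; field.
  rewrite cosB sinB cos2pi sin2pi c3 s3; by congr pair; field.
- have -> : 6%:R * pi / 3 = pi *+ 2 :> R by rewrite mulr2n; field.
  rewrite cos2pi sin2pi; by congr pair; field.
Qed.

Lemma cos_pi6 : cos (pi / 6 : R) = sqrt3 / 2.
Proof.
have -> : pi / 6 = pi / 2 - pi / 3 :> R by field.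
by rewrite cosB cos_pihalf sin_pihalf sin_pi3 mul0r add0r mul1r.
Qed.

Lemma sin_pi6 : sin (pi / 6 : R) = 1 / 2.
Proof.
have -> : pi / 6 = pi / 2 - pi / 3 :> R by field.
by rewrite sinB cos_pihalf sin_pihalf cos_pi3 mul0r subr0 mul1r.
Qed.

Lemma Ldir0 : Ldir R 0 = (sqrt3 / 2, 1 / 2) :> pt R.
Proof.
rewrite /Ldir /expi.
have -> : pi / 6 + 2 * 0%:R * pi / 3 = pi / 6 :> R by field.
by rewrite cos_pi6 sin_pi6.
Qed.

Lemma Ldir1 : Ldir R 1 = (- (sqrt3 / 2), 1 / 2) :> pt R.
Proof.
rewrite /Ldir /expi.
have -> : pi / 6 + 2 * 1%:R * pi / 3 = pi - pi / 6 :> R by field.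
rewrite cosB sinB cospi sinpi cos_pi6 sin_pi6; by congr pair; ring.
Qed.

Lemma Ldir2 : Ldir R 2 = (0, -1) :> pt R.
Proof.
rewrite /Ldir /expi.
have -> : pi / 6 + 2 * 2%:R * pi / 3 = pi + pi / 2 :> R by field.
rewrite cosD sinD cospi sinpi cos_pihalf sin_pihalf; by congr pair; ring.
Qed.

Definition lcoord (i : nat) (z : pt R) : R := pdot z (Ldir R i).

Lemma lcoord0E z : lcoord 0 z = sqrt3 / 2 * z.1 + 1 / 2 * z.2.
Proof. by rewrite /lcoord Ldir0 /pdot /=; ring. Qed.

Lemma lcoord1E z : lcoord 1 z = - (sqrt3 / 2) * z.1 + 1 / 2 * z.2.
Proof. by rewrite /lcoord Ldir1 /pdot /=; ring. Qed.

Lemma lcoord2E z : lcoord 2 z = - z.2.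
Proof. by rewrite /lcoord Ldir2 /pdot /=; ring. Qed.

Definition trilin (z : pt R) : tri R := Tri (lcoord 0 z) (lcoord 1 z) (lcoord 2 z).

Lemma trilin_sub z w : trilin (psub z w) = tsub (trilin z) (trilin w).
Proof. by rewrite /trilin /tsub !(lcoord0E, lcoord1E, lcoord2E) /=; congr Tri; ring. Qed.

Lemma trilin_add z w : trilin (padd z w) = tadd (trilin z) (trilin w).
Proof. by rewrite /trilin /tadd !(lcoord0E, lcoord1E, lcoord2E) /=; congr Tri; ring. Qed.

Lemma trilin_scale a z : trilin (pscale a z) = tscale a (trilin z).
Proof. by rewrite /trilin /tscale !(lcoord0E, lcoord1E, lcoord2E) /=; congr Tri; ring. Qed.

(* The directions of L_0, L_1, L_2 form a tight frame of the plane. *)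
Lemma pdot_lcoord z w : pdot z w = 2 / 3 * tdot (trilin z) (trilin w).
Proof.
rewrite /tdot /trilin /= !(lcoord0E, lcoord1E, lcoord2E) /pdot.
have h : sqrt3 * sqrt3 * (z.1 * w.1) = 3 * (z.1 * w.1) by rewrite sqrt3_mul_self.
lra.
Qed.

Lemma trilin_inj z w : trilin z = trilin w -> z = w.
Proof.
case: z => z1 z2; case: w => w1 w2.
move=> /tri_coordsE [] /=; rewrite !(lcoord0E, lcoord1E, lcoord2E) /= => h0 h1 h2.
have e2 : z2 = w2 by lra.
have : sqrt3 * (z1 - w1) = 0 by lra.
move/eqP; rewrite mulf_eq0 (negbTE sqrt3_neq0) /= subr_eq0 => /eqP ->.
by rewrite e2.
Qed.

Definition vertex_trilin (k : nat) : tri R :=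
  match k with
  | 0 => Tri 1 (-1) 0 | 1 => Tri 1 0 (-1) | 2 => Tri 0 1 (-1)
  | 3 => Tri (-1) 1 0 | 4 => Tri (-1) 0 1 | 5 => Tri 0 (-1) 1
  | _ => Tri 1 (-1) 0
  end.

Lemma trilin_hvertex k : (k <= 6)%N -> trilin (hvertex R k) = vertex_trilin k.
Proof.
move=> hk; rewrite hvertexE // /trilin !(lcoord0E, lcoord1E, lcoord2E).
have sqrt3_nz := sqrt3_neq0.
by case: k hk => [|[|[|[|[|[|[|k]]]]]]] // _ /=; congr Tri; field.
Qed.

Lemma on_edge_interior (k : 'I_6) P : edge_interior k P -> on_edge k (trilin P).
Proof.
case=> s [hs ->].
have k6 : (k <= 6)%N by apply: ltnW.
rewrite trilin_add trilin_scale /edge_dir trilin_sub !trilin_hvertex // /tadd.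
exists s; split => //.
by case: k k6 => [[|[|[|[|[|[|k]]]]]] hk] //= _; repeat split; ring.
Qed.

Lemma trilin_reflect (k : 'I_6) d :
  trilin (reflect_dir (edge_dir R k) d) = edge_reflect k (trilin d).
Proof.
have k6 : (k <= 6)%N by apply: ltnW.
rewrite /reflect_dir trilin_sub trilin_scale !pdot_lcoord.
have -> : trilin (edge_dir R k) = tsub (vertex_trilin k.+1) (vertex_trilin k).
  by rewrite /edge_dir trilin_sub !trilin_hvertex.
case: (trilin d) => c0 c1 c2; rewrite /tscale /tsub /tdot /=.
by case: k k6 => [[|[|[|[|[|[|k]]]]]] hk] //= _; congr Tri; field.
Qed.

Lemma proj_bar_segment k P Q :
  proj_bar k (segment P Q) =
  `[Num.max 0 (Num.min (pdot P (Ldir R k)) (pdot Q (Ldir R k))),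
    Num.min 1 (Num.max (pdot P (Ldir R k)) (pdot Q (Ldir R k)))]%classic.
Proof.
set a := pdot P (Ldir R k); set b := pdot Q (Ldir R k).
have lin s : pdot (padd P (pscale s (psub Q P))) (Ldir R k) = a + s * (b - a).
  by rewrite /a /b /pdot /padd /pscale /psub /=; ring.
apply/seteqP; split => t /=.
- move=> [/andP [t0 t1] [z [s [/andP [s0 s1] ez]] et]].
  rewrite ez lin in et.
  rewrite in_itv /= ge_max le_min ge_min le_max t0 t1 /=.
  case: (leP a b) => ab.
    by apply/andP; split; apply/orP; [left|right]; nra.
  by apply/andP; split; apply/orP; [right|left]; nra.
- rewrite in_itv /= ge_max le_min ge_min le_max => /andP [/andP [t0 h1] /andP [t1 h2]].
  split; first by rewrite t0 t1.
  case: (eqVneq a b) => ab.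
    exists P; last first.
      move: h1 h2; rewrite -ab !orbb => h1 h2; apply/eqP; rewrite eq_le h1 h2.
      by [].
    exists 0; split; first by rewrite lexx ler01.
    by rewrite /padd /pscale /= !mul0r !addr0; case: P {lin a ab h1 h2}.
  have ba : b - a != 0 by rewrite subr_eq0 eq_sym.
  exists (padd P (pscale ((t - a) / (b - a)) (psub Q P))); last first.
    by rewrite lin; field.
  exists ((t - a) / (b - a)); split => //.
  case: (ltP a b) => ab'.
  + have hba : 0 < b - a by rewrite subr_gt0.
    move: h1 h2 => /orP [h1|h1] /orP [h2|h2]; apply/andP; split;
      rewrite ?divr_ge0 ?ler_pdivrMr ?ler_pdivlMr // ?mul1r ?subr_ge0; lra.
  + have hba : b - a < 0 by rewrite subr_lt0 lt_neqAle eq_sym ab ab'.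
    move: h1 h2 => /orP [h1|h1] /orP [h2|h2]; apply/andP; split;
      rewrite ?ler_ndivrMr ?ler_ndivlMr // ?mul0r ?mul1r; lra.
Qed.

Lemma lebesgue_measure_clamped_itv (a b : R) : a <= 1 -> b <= 1 ->
  lebesgue_measure (`[Num.max 0 (Num.min a b), Num.min 1 (Num.max a b)]%classic : set R)
  = (`|pospart b - pospart a|)%:E.
Proof.
move=> a1 b1; rewrite lebesgue_measure_itv /= lte_fin /pospart.
case: (leP a b) => ab; case: (leP 0 a) => a0; case: (leP 0 b) => b0;
case: (leP a 1) => a1'; case: (leP b 1) => b1'; try (exfalso; lra);
case: ltP => h; try (exfalso; lra); rewrite ?subr0 ?sub0r ?subrr ?normr0 //.
all: try (rewrite -EFinD; congr EFin;
  first [rewrite ger0_norm; lra | rewrite ler0_norm; lra | rewrite normrN ger0_norm; lra]).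
all: match goal with |- _ = EFin (@Num.norm _ _ ?u) => have -> : u = 0 by lra end.
all: by rewrite normr0.
Qed.

Lemma seg_length_hexdist (P Q : pt R) kP kQ :
  on_edge kP (trilin P) -> on_edge kQ (trilin Q) ->
  seg_length P Q = (hexdist (trilin P) (trilin Q))%:E.
Proof.
move=> /on_edge_bounds [/andP [_ p0] /andP [_ p1] /andP [_ p2] _].
move=> /on_edge_bounds [/andP [_ q0] /andP [_ q1] /andP [_ q2] _].
rewrite /seg_length !big_ord_recr big_ord0 /= add0e !proj_bar_segment.
by rewrite !lebesgue_measure_clamped_itv // -!EFinD hexdist_sym.
Qed.

Lemma H_vertical (y : R) : -1 <= y <= 1 -> H ((0, y) : pt R).
Proof.
move=> /andP [y0 y1].
pose lam (k : 'I_6) :=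
  match val k with 1 | 2 => (1 + y) / 4 | 4 | 5 => (1 - y) / 4 | _ => 0 end.
exists lam; split; [|split].
- by case=> [[|[|[|[|[|[|k]]]]]] hk] //=; rewrite /lam /=; lra.
- by rewrite !big_ord_recr !big_ord0 /= /lam /=; lra.
- have e1 : \sum_(k < 6) lam k * (hvertex R k).1 = \sum_(k < 6) lam k * (vertex_xy k).1.
    by apply: eq_bigr => k _; rewrite hvertexE // ltnW.
  have e2 : \sum_(k < 6) lam k * (hvertex R k).2 = \sum_(k < 6) lam k * (vertex_xy k).2.
    by apply: eq_bigr => k _; rewrite hvertexE // ltnW.
  rewrite e1 e2 !big_ord_recr !big_ord0 /= /lam /=.
  by have sqrt3_nz := sqrt3_neq0; congr pair; field.
Qed.

Lemma trilin_up : trilin ((0, 1) : pt R) = Tri (1/2) (1/2) (-1).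
Proof. by rewrite /trilin lcoord0E lcoord1E lcoord2E /=; congr Tri; ring. Qed.

Lemma trilin_down : trilin ((0, -1) : pt R) = Tri (-(1/2)) (-(1/2)) 1.
Proof. by rewrite /trilin lcoord0E lcoord1E lcoord2E /=; congr Tri; ring. Qed.

Lemma vertical_geodesic_restricted : restricted_closed_geodesic 2 (vertical_geodesic R).
Proof.
rewrite /restricted_closed_geodesic /vertical_geodesic.
have sqrt3_pos := sqrt3_gt0; have sqrt3_nz := sqrt3_neq0.
split => //; split => //; split.
  by move=> j; rewrite addn2 /= negbK.
split.
  by move=> j /=; case: (odd j) => /= e; have := f_equal snd e => /= h; lra.
split.
  move=> j t [s [/andP [s0 s1] ->]]; rewrite /padd /pscale /psub /=.
  case: (odd j) => /=; rewrite subrr mulr0 addr0; apply: H_vertical; apply/andP; split; nra.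
move=> j.
have e2 : odd j.+2 = odd j by rewrite /= negbK.
rewrite e2 /=.
case: (boolP (odd j)) => oj /=.
- exists (Ordinal (isT : (4 < 6)%N)); split.
    exists (1/2); split; first by apply/andP; split; lra.
    by rewrite /edge_dir !hvertexE //= /padd /pscale /psub /=; congr pair; field.
  exists 1 => //.
  apply: trilin_inj; rewrite trilin_scale trilin_reflect !trilin_sub trilin_up trilin_down /=.
  by congr Tri; simpl; lra.
- exists (Ordinal (isT : (1 < 6)%N)); split.
    exists (1/2); split; first by apply/andP; split; lra.
    by rewrite /edge_dir !hvertexE //= /padd /pscale /psub /=; congr pair; field.
  exists 1 => //.
  apply: trilin_inj; rewrite trilin_scale trilin_reflect !trilin_sub trilin_up trilin_down /=.
  by congr Tri; simpl; lra.
Qed.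

Lemma vertical_geodesic_length : geodesic_length 2 (vertical_geodesic R) = 4%:E.
Proof.
have hu : on_edge 1 (trilin ((0, 1) : pt R)).
  rewrite trilin_up; exists (1/2); split; first by apply/andP; split; lra.
  by rewrite /=; split; [|split]; lra.
have hd : on_edge 4 (trilin ((0, -1) : pt R)).
  rewrite trilin_down; exists (1/2); split; first by apply/andP; split; lra.
  by rewrite /=; split; [|split]; lra.
rewrite /geodesic_length !big_ord_recr big_ord0 /= add0e /vertical_geodesic /=.
rewrite (seg_length_hexdist hd hu) (seg_length_hexdist hu hd) -EFinD.
rewrite trilin_up trilin_down /hexdist /=; congr EFin.
pospart_tac; rewrite !(sub0r, subr0, normrN) !ger0_norm; lra.
Qed.

Lemma restricted_geodesic_length_ge4 (N : nat) (P : nat -> pt R) :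
  restricted_closed_geodesic N P -> (4%:E <= geodesic_length N P)%E.
Proof.
case=> N_gt0 [N_even [P_periodic [P_neq [_ P_bounce]]]].
pose x j := trilin (P j).
have x_periodic j : x (j + N)%N = x j by rewrite /x P_periodic.
have x_neq j : x j <> x j.+1 by move/trilin_inj; exact: P_neq.
have x_bounce j : exists k, on_edge k (x j.+1) /\ exists l : R, 0 < l /\
    tsub (x j.+2) (x j.+1) = tscale l (edge_reflect k (tsub (x j.+1) (x j))).
  case: (P_bounce j) => k [hk [l l_gt0 e]]; exists k; split; first exact: on_edge_interior.
  by exists l; split => //; rewrite /x -!trilin_sub e trilin_scale trilin_reflect.
have x_on_edge := on_some_edge N_gt0 x_periodic x_bounce.
rewrite /geodesic_length (eq_bigr (fun j : 'I_N => (hexdist (x j) (x j.+1))%:E)).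
  by rewrite sumEFin lee_fin (loop_length_ge4 N_gt0 x_periodic x_neq x_bounce N_even).
move=> j _; case: (x_on_edge j) => k1 h1; case: (x_on_edge j.+1) => k2 h2.
exact: seg_length_hexdist h1 h2.
Qed.

End Hexagon_coordinates.

Theorem proposition4p2 (R : realType) :
  (forall (N : nat) (P : nat -> pt R),
     restricted_closed_geodesic N P -> (4%:E <= geodesic_length N P)%E) /\
  (restricted_closed_geodesic 2 (@vertical_geodesic R) /\
   geodesic_length 2 (@vertical_geodesic R) = 4%:E).
Proof.
split; first exact: restricted_geodesic_length_ge4.
split; [exact: vertical_geodesic_restricted | exact: vertical_geodesic_length].
Qed.
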